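(* Let $H$ be a complex Hilbert space, $\varphi,\psi:[0,1]\to\mathbb{R}$ continuous, $t\in[0,1]$, and let $(A_n)\subset\mathbb{B}(H)$ and $A\in\mathbb{B}(H)$ satisfy $\|A_n-A\|_t\to0$ as $n\to\infty$. Then $$\omega_t(\varphi,\psi;A)=\lim_{n\to\infty}\omega_t(\varphi,\psi;A_n)\quad\text{and}\quad c_t(\varphi,\psi;A)=\lim_{n\to\infty}c_t(\varphi,\psi;A_n).$$
   Context: $S_1(H)$ is the unit sphere of $H$. For $B\in\mathbb{B}(H)$: $\|B\|_t=\|\varphi(t)B+\psi(t)B^*\|$ (operator norm), $\omega_t(\varphi,\psi;B)=\sup_{x\in S_1(H)}|\langle(\varphi(t)B+\psi(t)B^* )x,x\rangle|$, $c_t(\varphi,\psi;B)=\inf_{x\in S_1(H)}|\langle(\varphi(t)B+\psi(t)B^* )x,x\rangle|$. *)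

From HB Require Import structures.
From mathcomp Require Import all_boot all_order all_algebra.
From mathcomp Require Import complex.
From mathcomp Require Import all_classical all_reals all_analysis.
From Stdlib Require Import ClassicalEpsilon.
Set Implicit Arguments. Unset Strict Implicit. Unset Printing Implicit Defensive.
Import Order.TTheory GRing.Theory Num.Theory numFieldNormedType.Exports.
Local Open Scope ring_scope.
Local Open Scope classical_set_scope.

Section Hilbert.
Variable R : realType.
Variable V : lmodType R[i].
Variable ip : V -> V -> R[i].   (* inner product, linear in the 1st argument *)

Definition hnorm (x : V) : R := Num.sqrt (complex.Re (ip x x)).

Definition is_hilbert : Prop :=
  [/\ (forall (a : R[i]) (x y z : V), ip (a *: x + y) z = a * ip x z + ip y z),
      (forall x y : V, ip y x = conjc (ip x y)),
      (forall x : V, 0 <= ip x x),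
      (forall x : V, ip x x = 0 -> x = 0) &
      (forall u : nat -> V,
         (forall e : R, 0 < e -> exists N : nat, forall m n : nat,
            (N <= m)%N -> (N <= n)%N -> hnorm (u m - u n) < e) ->
         exists l : V, forall e : R, 0 < e -> exists N : nat, forall n : nat,
            (N <= n)%N -> hnorm (u n - l) < e)].

Definition bounded_op (B : V -> V) : Prop :=
  (forall (a : R[i]) (x y : V), B (a *: x + y) = a *: B x + B y) /\
  exists M : R, forall x : V, hnorm (B x) <= M * hnorm x.

Definition is_adjoint (B Bs : V -> V) : Prop :=
  forall x y : V, ip (B x) y = ip x (Bs y).

(* the adjoint B^* (unique when it exists; it exists for B \in B(H)) *)
Definition adj (B : V -> V) : V -> V :=
  epsilon (inhabits (fun x : V => x)) (fun Bs => is_adjoint B Bs).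

Definition S1 : set V := [set x | hnorm x = 1].

Definition opnorm (T : V -> V) : R := sup [set hnorm (T x) | x in S1].

Definition opt (phi psi : R -> R) (t : R) (B : V -> V) : V -> V :=
  fun x => real_complex R (phi t) *: B x + real_complex R (psi t) *: adj B x.

Definition tnorm (phi psi : R -> R) (t : R) (B : V -> V) : R :=
  opnorm (opt phi psi t B).

Definition omega_t (phi psi : R -> R) (t : R) (B : V -> V) : R :=
  sup [set Normc.normc (ip (opt phi psi t B x) x) | x in S1].

Definition c_t (phi psi : R -> R) (t : R) (B : V -> V) : R :=
  inf [set Normc.normc (ip (opt phi psi t B x) x) | x in S1].

End Hilbert.

From mathcomp Require Import all_boot all_order all_algebra.
From mathcomp Require Import complex.
From mathcomp Require Import all_classical all_reals all_analysis.
From mathcomp Require Import ring lra.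
From Stdlib Require Import ClassicalEpsilon.
Set Implicit Arguments. Unset Strict Implicit. Unset Printing Implicit Defensive.
Import Order.TTheory GRing.Theory Num.Theory numFieldNormedType.Exports.
Local Open Scope ring_scope.
Local Open Scope classical_set_scope.
Local Open Scope complex_scope.

(* The real part of the inner product is a real inner product, and completeness
   gives a Riesz representation for bounded real-linear functionals f: a
   maximizing sequence for f on the unit ball is Cauchy by the parallelogram
   law, and its limit spans the orthogonal complement of ker f.  Applied to
   x |-> Re <B x, y> this produces the adjoint of every bounded operator B, so
   that T_B := phi(t) B + psi(t) B^* is additive in B.  Hence, for x in the
   unit sphere,
     | |<T_B x, x>| - |<T_C x, x>| | <= |T_(B-C) x| <= |B - C|_t,
   and taking suprema and infima over the sphere shows that omega_t and c_t are
   1-Lipschitz for |.|_t. *)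

Section SupInf.
Variable R : realType.

Lemma sup_ge0 (E : set R) : (forall x, E x -> 0 <= x) -> 0 <= sup E.
Proof.
move=> E_ge0; have [[[x Ex] ubE]|/sup_out -> //] := pselect (has_sup E).
exact: le_trans (E_ge0 _ Ex) (sup_upper_bound (conj (ex_intro _ x Ex) ubE) Ex).
Qed.

Lemma sup_image_leD (T : Type) (S : set T) (f g : T -> R) (e : R) :
  S !=set0 -> has_ubound (g @` S) -> (forall x, S x -> f x <= g x + e) ->
  sup (f @` S) <= sup (g @` S) + e.
Proof.
move=> [x0 Sx0] ubg fge; apply: ge_sup; first by exists (f x0), x0.
move=> _ [x Sx <-]; apply: le_trans (fge x Sx) _.
by rewrite lerD2r; apply: ub_le_sup ubg _ (ex_intro2 _ _ x Sx erefl).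
Qed.

Lemma dist_sup_image_le (T : Type) (S : set T) (f g : T -> R) (e : R) :
  0 <= e -> has_ubound (f @` S) -> has_ubound (g @` S) ->
  (forall x, S x -> `|f x - g x| <= e) -> `|sup (f @` S) - sup (g @` S)| <= e.
Proof.
move=> e_ge0 ubf ubg fg.
have [->|/set0P S0] := eqVneq S set0; first by rewrite !image_set0 subrr normr0.
rewrite ler_distl lerBlDr !sup_image_leD // => x Sx;
  by have := fg x Sx; rewrite ler_distl lerBlDr => /andP[].
Qed.

Lemma dist_inf_image_le (T : Type) (S : set T) (f g : T -> R) (e : R) :
  0 <= e -> has_lbound (f @` S) -> has_lbound (g @` S) ->
  (forall x, S x -> `|f x - g x| <= e) -> `|inf (f @` S) - inf (g @` S)| <= e.
Proof.
move=> e_ge0 /has_lb_ubN lbf /has_lb_ubN lbg fg.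
rewrite /inf -opprD normrN !image_comp.
rewrite !image_comp in lbf lbg.
by apply: dist_sup_image_le => // x Sx /=; rewrite -opprD normrN fg.
Qed.

End SupInf.

Lemma quad_ge0_lin_coef0 (R : realFieldType) (a b : R) :
  (forall s, 0 <= 2 * s * a + s ^+ 2 * b) -> a = 0.
Proof.
move=> quad_ge0.
have c_gt0 : 0 < `|b| + 1 by rewrite ltr_pwDr.
have cb_le1 : (`|b| + 1)^-1 * b <= 1.
  rewrite -[X in _ <= X](mulVf (lt0r_neq0 c_gt0)) ler_wpM2l ?invr_ge0 ?ltW //.
  by rewrite (le_lt_trans (ler_norm b)) // ltrDl.
have : 0 <= a ^+ 2 * (`|b| + 1)^-1 * ((`|b| + 1)^-1 * b - 2).
  by have := quad_ge0 (- a / (`|b| + 1)); congr (_ <= _); ring.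
have : 0 <= a ^+ 2 * (`|b| + 1)^-1 by rewrite mulr_ge0 ?sqr_ge0 ?invr_ge0 ?ltW.
move: cb_le1; set X := a ^+ 2 * _; set Y := _ * b => Y_le1 X_ge0 XY_ge0.
have X0 : X = 0 by nra.
by move: X0 => /eqP; rewrite mulf_eq0 invr_eq0 (gt_eqF c_gt0) orbF sqrf_eq0 => /eqP.
Qed.

Lemma le_of_sqr_le_mul (R : realDomainType) (a c : R) :
  0 <= a -> 0 <= c -> a ^+ 2 <= a * c -> a <= c.
Proof. nra. Qed.

Section ComplexNorm.
Variable R : rcfType.
Implicit Types (c : R[i]) (k : R).

Lemma normc_ge0 c : 0 <= Normc.normc c.
Proof. by case: c => a b; apply: sqrtr_ge0. Qed.

Lemma normc_real k : Normc.normc k%:C = `|k|.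
Proof. by rewrite /Normc.normc /= expr0n addr0 sqrtr_sqr. Qed.

Lemma normc_conjc c : Normc.normc c^* = Normc.normc c.
Proof. by case: c => a b; rewrite /Normc.normc /= sqrrN. Qed.

Lemma mulcJ_normc c : c * c^* = (Normc.normc c ^+ 2)%:C.
Proof. by rewrite -sqr_normc normc_def -rmorphXn; case: c. Qed.

Lemma dist_normc_le c1 c2 :
  `|Normc.normc c1 - Normc.normc c2| <= Normc.normc (c1 - c2).
Proof. exact: (@ler_dist_dist R (Rcomplex R)). Qed.

Lemma complex_eq_Re c1 c2 :
  complex.Re c1 = complex.Re c2 -> complex.Re ('i * c1) = complex.Re ('i * c2) ->
  c1 = c2.
Proof.
case: c1 => a1 b1; case: c2 => a2 b2 /= -> /eqP.
by rewrite !mul0r !mul1r !add0r eqr_opp => /eqP ->.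
Qed.

End ComplexNorm.

Section InnerProduct.
Variables (R : realType) (V : lmodType R[i]) (ip : V -> V -> R[i]).
Hypothesis ip_linear :
  forall (a : R[i]) (x y z : V), ip (a *: x + y) z = a * ip x z + ip y z.
Hypothesis ip_conj : forall x y : V, ip y x = (ip x y)^*.
Hypothesis ip_ge0 : forall x : V, 0 <= ip x x.
Hypothesis ip_eq0 : forall x : V, ip x x = 0 -> x = 0.

Local Notation hn := (hnorm ip).
Implicit Types (x y z : V) (a : R[i]) (s : R).

Lemma ipDl x y z : ip (x + y) z = ip x z + ip y z.
Proof. by rewrite -[x]scale1r ip_linear mul1r scale1r. Qed.

Lemma ip0l z : ip 0 z = 0.
Proof. by apply: (addIr (ip 0 z)); rewrite -ipDl !addr0 add0r. Qed.

Lemma ipZl a x z : ip (a *: x) z = a * ip x z.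
Proof. by rewrite -[a *: x]addr0 ip_linear ip0l addr0. Qed.

Lemma ipNl x z : ip (- x) z = - ip x z.
Proof. by rewrite -scaleN1r ipZl mulN1r. Qed.

Lemma ipBl x y z : ip (x - y) z = ip x z - ip y z.
Proof. by rewrite ipDl ipNl. Qed.

Lemma ipZr a x z : ip z (a *: x) = a^* * ip z x.
Proof. by rewrite ip_conj ipZl rmorphM /= -ip_conj. Qed.

Lemma ipBr x y z : ip z (x - y) = ip z x - ip z y.
Proof. by rewrite ip_conj ipBl rmorphB /= -!ip_conj. Qed.

Definition rip x y := complex.Re (ip x y).

Lemma ip_real x : ip x x = (rip x x)%:C.
Proof. by rewrite /rip RRe_real // ger0_real. Qed.

Lemma rip_ge0 x : 0 <= rip x x.
Proof. by have := ip_ge0 x; rewrite ip_real lecR. Qed.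

Lemma rip_eq0 x : rip x x = 0 -> x = 0.
Proof. by move=> xx0; apply: ip_eq0; rewrite ip_real xx0. Qed.

Lemma ripC x y : rip x y = rip y x.
Proof. by rewrite /rip [ip y x]ip_conj; case: (ip x y). Qed.

Lemma ripDl x y z : rip (x + y) z = rip x z + rip y z.
Proof. by rewrite /rip ipDl; case: (ip x z); case: (ip y z). Qed.

Lemma ripZl s x z : rip (s%:C *: x) z = s * rip x z.
Proof. by rewrite /rip ipZl; case: (ip x z) => a b /=; rewrite mul0r subr0. Qed.

Lemma ripNl x z : rip (- x) z = - rip x z.
Proof. by rewrite /rip ipNl; case: (ip x z). Qed.

Lemma ripDr x y z : rip z (x + y) = rip z x + rip z y.
Proof. by rewrite ripC ripDl !(ripC z). Qed.

Lemma ripZr s x z : rip z (s%:C *: x) = s * rip z x.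
Proof. by rewrite ripC ripZl ripC. Qed.

Lemma ripNr x z : rip z (- x) = - rip z x.
Proof. by rewrite ripC ripNl ripC. Qed.

Lemma rip0r z : rip z 0 = 0.
Proof. by rewrite -(scale0r 0) -[0 : R[i]]/(0%:C) ripZr mul0r. Qed.

Lemma rip_sqr_le x y : rip x y ^+ 2 <= rip x x * rip y y.
Proof.
have [yy0|yy_neq0] := eqVneq (rip y y) 0.
  by rewrite (rip_eq0 yy0) !rip0r expr0n mulr0.
have yy_gt0 : 0 < rip y y by rewrite lt_def yy_neq0 rip_ge0.
pose q := rip x y / rip y y.
have qE : q * rip y y = rip x y by rewrite mulfVK.
have := rip_ge0 (x + (- q)%:C *: y).
rewrite !ripDl !ripDr !ripZl !ripZr (ripC y x); nra.
Qed.

Lemma hnorm_ge0 x : 0 <= hn x.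
Proof. exact: sqrtr_ge0. Qed.

Lemma hnorm_sqr x : hn x ^+ 2 = rip x x.
Proof. by rewrite sqr_sqrtr // rip_ge0. Qed.

Lemma hnorm0 : hn 0 = 0.
Proof. by rewrite /hnorm ip0l sqrtr0. Qed.

Lemma hnorm_eq0 x : hn x = 0 -> x = 0.
Proof. by move=> x0; apply: rip_eq0; rewrite -hnorm_sqr x0 expr0n. Qed.

Lemma ler_rip x y : `|rip x y| <= hn x * hn y.
Proof.
rewrite -ler_sqr ?nnegrE ?mulr_ge0 ?hnorm_ge0 //.
by rewrite real_normK ?num_real // exprMn !hnorm_sqr rip_sqr_le.
Qed.

Lemma hnormZ a x : hn (a *: x) = Normc.normc a * hn x.
Proof.
apply/eqP; rewrite -(@eqrXn2 _ 2) ?mulr_ge0 ?hnorm_ge0 ?normc_ge0 //.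
by rewrite exprMn !hnorm_sqr /rip ipZl ipZr mulrA mulcJ_normc ip_real -rmorphM.
Qed.

Lemma hnormN x : hn (- x) = hn x.
Proof. by rewrite -scaleN1r hnormZ normcN Normc.normc1 mul1r. Qed.

Lemma ler_hnormD x y : hn (x + y) <= hn x + hn y.
Proof.
rewrite -ler_sqr ?nnegrE ?addr_ge0 ?hnorm_ge0 //.
rewrite hnorm_sqr ripDl !ripDr (ripC y x) sqrrD !hnorm_sqr.
have := ler_rip x y; have := ler_norm (rip x y); lra.
Qed.

Lemma ler_hnormB x y : hn (x - y) <= hn x + hn y.
Proof. by rewrite -(hnormN y) ler_hnormD. Qed.

Lemma hnorm_parallelogram x y :
  hn (x - y) ^+ 2 + hn (x + y) ^+ 2 = 2 * hn x ^+ 2 + 2 * hn y ^+ 2.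
Proof. by rewrite !hnorm_sqr !ripDl !ripDr !ripNl !ripNr (ripC y x); ring. Qed.

Lemma ler_normc_ip x y : Normc.normc (ip x y) <= hn x * hn y.
Proof.
set w := ip x y.
apply: le_of_sqr_le_mul; rewrite ?normc_ge0 ?mulr_ge0 ?hnorm_ge0 //.
have := ler_rip (w^* *: x) y.
rewrite /rip ipZl mulrC mulcJ_normc hnormZ normc_conjc /=.
by rewrite ger0_norm ?exprn_ge0 ?normc_ge0 // mulrA.
Qed.

Definition hcauchy (u : nat -> V) := forall e : R, 0 < e -> exists N : nat,
  forall m n : nat, (N <= m)%N -> (N <= n)%N -> hn (u m - u n) < e.

Definition hlimit (u : nat -> V) (l : V) := forall e : R, 0 < e ->
  exists N : nat, forall n : nat, (N <= n)%N -> hn (u n - l) < e.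

Lemma hlimit_cvg u l : hlimit u l -> (fun n => hn (u n - l)) @ \oo --> 0.
Proof.
move=> ul; apply/cvgrPdist_lt => e e_gt0; have [N uN] := ul e e_gt0.
by exists N => // n /uN; rewrite sub0r normrN ger0_norm ?hnorm_ge0.
Qed.

Lemma hcauchy_harmonic (u : nat -> V) (c : R) : 0 < c ->
  (forall m n, hn (u m - u n) ^+ 2 <= c * (harmonic m + harmonic n)) ->
  hcauchy u.
Proof.
move=> c_gt0 u_sqr e e_gt0.
pose d := e ^+ 2 / (2 * c).
have d_gt0 : 0 < d by rewrite divr_gt0 ?exprn_gt0 ?mulr_gt0.
have cdE : c * (2 * d) = e ^+ 2 by rewrite /d; field; rewrite gt_eqF.
have [N _ hN] := (cvgrPdist_lt _ _).1 (@cvg_harmonic R) _ d_gt0.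
exists N => m n mN nN.
rewrite -ltr_sqr ?nnegrE ?hnorm_ge0 ?ltW // -cdE.
apply: le_lt_trans (u_sqr m n) _; rewrite ltr_pM2l //.
have := hN m mN; have := hN n nN.
rewrite /= !sub0r !normrN !gtr0_norm ?invr_gt0 ?ltr0Sn // => n_lt m_lt.
by rewrite mulr_natl mulr2n ltrD.
Qed.

Hypothesis complete : forall u, hcauchy u -> exists l, hlimit u l.

Section RieszRepresentation.
Variables (f : V -> R) (M : R).
Hypothesis f_linear : forall s x y, f (s%:C *: x + y) = s * f x + f y.
Hypothesis f_bounded : forall x, `|f x| <= M * hn x.

Let fD x y : f (x + y) = f x + f y.
Proof. by have := f_linear 1 x y; rewrite rmorph1 scale1r mul1r. Qed.

Let f0 : f 0 = 0.
Proof. by apply: (addIr (f 0)); rewrite -fD !addr0 add0r. Qed.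

Let fZ s x : f (s%:C *: x) = s * f x.
Proof. by rewrite -[_ *: x]addr0 f_linear f0 addr0. Qed.

Let fN x : f (- x) = - f x.
Proof. by have := fZ (-1) x; rewrite rmorphN1 scaleN1r mulN1r. Qed.

Let fB x y : f (x - y) = f x - f y.
Proof. by rewrite fD fN. Qed.

Local Notation ball := [set x | hn x <= 1].
Let K := sup [set f x | x in ball].

Lemma has_sup_ball : has_sup [set f x | x in ball].
Proof.
split; first by exists (f 0), 0; rewrite //= hnorm0.
exists `|M| => _ [x /= x_le1 <-].
have := f_bounded x; have := ler_norm (f x); have := ler_norm M.
have := hnorm_ge0 x; have := normr_ge0 M; nra.
Qed.

Lemma sup_ball_ge0 : 0 <= K.
Proof.
by rewrite -f0; apply: sup_upper_bound has_sup_ball _ _; exists 0; rewrite //= hnorm0.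
Qed.

Lemma le_sup_ball w : f w <= K * hn w.
Proof.
have [w0|w_neq0] := eqVneq (hn w) 0; first by rewrite (hnorm_eq0 w0) f0 hnorm0 mulr0.
have w_gt0 : 0 < hn w by rewrite lt_def w_neq0 hnorm_ge0.
have : f ((hn w)^-1%:C *: w) <= K.
  apply: sup_upper_bound has_sup_ball _ _; exists ((hn w)^-1%:C *: w) => //=.
  by rewrite hnormZ normc_real ger0_norm ?invr_ge0 ?hnorm_ge0 // mulVf.
by rewrite fZ -ler_pdivrMr // [_ / hn w]mulrC.
Qed.

Lemma sup_ball_approx_close x y (a b : R) :
  hn x <= 1 -> hn y <= 1 -> K - a <= f x -> K - b <= f y ->
  K * hn (x - y) ^+ 2 <= 4 * (a + b).
Proof.
move=> x_le1 y_le1 fx fy.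
have K_ge0 := sup_ball_ge0.
have := le_sup_ball x; have := le_sup_ball y; have := le_sup_ball (x + y).
have := hnorm_parallelogram x y; rewrite fD.
have := hnorm_ge0 x; have := hnorm_ge0 y; have := hnorm_ge0 (x + y).
set P := hn (x + y); set Q := hn (x - y) => P_ge0 y_ge0 x_ge0 pl fxy hy hx.
have ab_ge0 : 0 <= a + b by nra.
have KQ : K * Q ^+ 2 <= K * (4 - P ^+ 2) by rewrite ler_wpM2l //; nra.
apply: le_trans KQ _; have [P_le2|P_gt2] := lerP P 2; last by nra.
have -> : K * (4 - P ^+ 2) = (2 + P) * (K * (2 - P)) by ring.
apply: le_trans (_ : (2 + P) * (a + b) <= _); last by nra.
by rewrite ler_wpM2l; nra.
Qed.

Lemma exists_sup_ball_attained : 0 < K -> exists l, hn l = 1 /\ f l = K.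
Proof.
move=> K_gt0.
have /choice[xs xsP] : forall n, exists x, hn x <= 1 /\ K - harmonic n < f x.
  move=> n; have [_ [x x_le1 <-] Kfx] := sup_adherent (harmonic_gt0 n) has_sup_ball.
  by exists x.
have xs_cauchy : hcauchy xs.
  apply: (@hcauchy_harmonic _ (4 / K)) => [|m n]; first by rewrite divr_gt0.
  rewrite mulrAC ler_pdivlMr // mulrC.
  have [xm1 fxm] := xsP m; have [xn1 fxn] := xsP n.
  by apply: sup_ball_approx_close; rewrite // ltW.
have [l xs_l] := complete xs_cauchy.
have dist0 := hlimit_cvg xs_l.
have l_le1 : hn l <= 1.
  rewrite -[1]addr0; apply: cvgr_to_ge (cvgD (cvg_cst (1 : R)) dist0) _.
  apply: nearW => n; rewrite fctE; have [xn_le1 _] := xsP n.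
  have := ler_hnormB (xs n) (xs n - l); rewrite subKr => /le_trans; apply.
  by rewrite lerD2r.
have K_le : K <= f l.
  have := cvgr_to_ge
    (cvgD (cvgD (cvg_cst (f l)) (cvgM (cvg_cst K) dist0)) (@cvg_harmonic R)).
  rewrite mulr0 !addr0; apply.
  apply: nearW => n; have [_] := xsP n; rewrite !fctE /= ltrBlDr.
  move=> /ltW /le_trans; apply; rewrite lerD2r -lerBlDl -fB.
  exact: le_sup_ball.
have := le_sup_ball l; have := hnorm_ge0 l => l_ge0 fl_le.
by exists l; split; apply/le_anti/andP; split; nra.
Qed.

Lemma sup_ball_maximizer_orthogonal l u :
  0 < K -> hn l = 1 -> f l = K -> f u = 0 -> rip l u = 0.
Proof.
move=> K_gt0 l1 fl fu; apply: (@quad_ge0_lin_coef0 _ _ (rip u u)) => s.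
have := le_sup_ball (l + s%:C *: u).
rewrite fD fZ fu mulr0 addr0 fl -{1}[K]mulr1 ler_pM2l // => one_le.
have : 1 <= hn (l + s%:C *: u) ^+ 2 by rewrite -(expr1n _ 2) ler_sqr ?nnegrE ?hnorm_ge0.
rewrite hnorm_sqr !ripDl !ripDr !ripZl !ripZr -hnorm_sqr l1 (ripC u l); lra.
Qed.

Theorem riesz_real : exists z, forall x, f x = rip x z.
Proof.
have := sup_ball_ge0; rewrite le_eqVlt => /orP[/eqP K0|K_gt0].
  exists 0 => x; rewrite rip0r; apply/le_anti.
  by have := le_sup_ball x; have := le_sup_ball (- x); rewrite fN -K0 !mul0r; lra.
have [l [l1 fl]] := exists_sup_ball_attained K_gt0.
exists (K%:C *: l) => y.
have := sup_ball_maximizer_orthogonal (u := y - (f y / K)%:C *: l) K_gt0 l1 fl.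
rewrite fB fZ fl mulfVK ?gt_eqF // subrr => /(_ erefl).
rewrite ripDr ripNr ripZr -hnorm_sqr l1 expr1n mulr1 ripZr ripC => /eqP.
by rewrite subr_eq0 => /eqP ->; rewrite mulrC mulfVK ?gt_eqF.
Qed.

End RieszRepresentation.

Lemma bounded_opZ B a x : bounded_op ip B -> B (a *: x) = a *: B x.
Proof.
case=> B_lin _; have B0 : B 0 = 0.
  by have := B_lin 1 0 0; rewrite scaler0 addr0 scale1r -{1}[B 0]addr0 => /addrI.
by rewrite -[a *: x]addr0 B_lin B0 addr0.
Qed.

Lemma adjoint_exists B : bounded_op ip B -> exists Bs, is_adjoint ip B Bs.
Proof.
move=> bB; have [B_lin [M BM]] := bB.
suff /choice[Bs BsP] : forall y, exists z, forall x, ip (B x) y = ip x z by exists Bs.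
move=> y; have [|x|z Bz] := @riesz_real (fun x => rip (B x) y) (M * hn y).
- by move=> s x x'; rewrite B_lin ripDl ripZl.
- apply: le_trans (ler_rip _ _) _.
  by rewrite mulrAC ler_wpM2r ?hnorm_ge0.
(* The imaginary part of <B x, y> is the real part at 'i x. *)
exists z => x; apply: complex_eq_Re; first exact: Bz.
by rewrite -!ipZl -bounded_opZ //; apply: Bz.
Qed.

Lemma adjP B : bounded_op ip B -> is_adjoint ip B (adj ip B).
Proof. by move/adjoint_exists; apply: epsilon_spec. Qed.

Lemma ip_injr u v : (forall x, ip x u = ip x v) -> u = v.
Proof.
move=> uv; apply/eqP; rewrite -subr_eq0; apply/eqP/ip_eq0.
by rewrite ipBr uv subrr.
Qed.

Lemma adj_eq B Bs : is_adjoint ip B Bs -> adj ip B =1 Bs.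
Proof.
move=> BBs y; apply: ip_injr => x.
by rewrite -BBs -(epsilon_spec _ _ (ex_intro _ Bs BBs)).
Qed.

Lemma adjB B C : bounded_op ip B -> bounded_op ip C ->
  adj ip (fun x => B x - C x) =1 (fun y => adj ip B y - adj ip C y).
Proof.
by move=> bB bC; apply: adj_eq => x y; rewrite ipBl ipBr (adjP bB) (adjP bC).
Qed.

Lemma hnorm_adj_le B M : bounded_op ip B -> (forall x, hn (B x) <= M * hn x) ->
  forall y, hn (adj ip B y) <= M * hn y.
Proof.
move=> bB BM y; apply: le_of_sqr_le_mul; rewrite ?hnorm_ge0 //.
  exact: le_trans (hnorm_ge0 _) (BM y).
rewrite hnorm_sqr /rip -(adjP bB); apply: le_trans (ler_norm _) _.
apply: le_trans (ler_rip _ _) _.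
by rewrite mulrA [_ * M]mulrC ler_wpM2r ?hnorm_ge0.
Qed.

Section NumericalRange.
Variables (phi psi : R -> R) (t : R).
Local Notation T := (opt ip phi psi t).

Lemma bounded_opB B C : bounded_op ip B -> bounded_op ip C ->
  bounded_op ip (fun x => B x - C x).
Proof.
move=> [B_lin [MB BM]] [C_lin [MC CM]]; split.
  by move=> a x y; rewrite B_lin C_lin opprD addrACA -scalerBr.
exists (MB + MC) => x; apply: le_trans (ler_hnormB _ _) _.
by rewrite mulrDl lerD.
Qed.

Lemma optB B C : bounded_op ip B -> bounded_op ip C ->
  forall x, T (fun x => B x - C x) x = T B x - T C x.
Proof.
move=> bB bC x; rewrite /opt adjB // !scalerBr opprD !addrA.
by congr (_ + _); rewrite addrAC.
Qed.

Lemma opt_sphere_ub B : bounded_op ip B -> exists K, forall x, S1 ip x -> hn (T B x) <= K.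
Proof.
move=> bB; have [_ [M BM]] := bB.
exists ((`|phi t| + `|psi t|) * M) => x x1; rewrite -[leRHS]mulr1 -x1.
apply: le_trans (ler_hnormD _ _) _; rewrite !hnormZ !normc_real.
have := BM x; have := hnorm_adj_le bB BM x.
have := normr_ge0 (phi t); have := normr_ge0 (psi t); nra.
Qed.

Lemma tnorm_ge0 B : 0 <= tnorm ip phi psi t B.
Proof. by apply: sup_ge0 => _ [x _ <-]; apply: hnorm_ge0. Qed.

Lemma dist_ip_opt_le B C x : bounded_op ip B -> bounded_op ip C -> S1 ip x ->
  `|Normc.normc (ip (T B x) x) - Normc.normc (ip (T C x) x)|
    <= tnorm ip phi psi t (fun x => B x - C x).
Proof.
move=> bB bC x1; apply: le_trans (dist_normc_le _ _) _.
rewrite -ipBl -optB //; apply: le_trans (ler_normc_ip _ _) _.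
rewrite x1 mulr1; have [K BCK] := opt_sphere_ub (bounded_opB bB bC).
by apply: ub_le_sup; [exists K => _ [y y1 <-]; apply: BCK | exists x].
Qed.

Lemma numerical_range_ub B : bounded_op ip B ->
  has_ubound [set Normc.normc (ip (T B x) x) | x in S1 ip].
Proof.
move=> bB; have [K BK] := opt_sphere_ub bB; exists K => _ [x x1 <-].
by apply: le_trans (ler_normc_ip _ _) _; rewrite x1 mulr1 BK.
Qed.

Lemma numerical_range_lb B :
  has_lbound [set Normc.normc (ip (T B x) x) | x in S1 ip].
Proof. by exists 0 => _ [x _ <-]; apply: normc_ge0. Qed.

Lemma omega_t_dist_le B C : bounded_op ip B -> bounded_op ip C ->
  `|omega_t ip phi psi t B - omega_t ip phi psi t C|
    <= tnorm ip phi psi t (fun x => B x - C x).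
Proof.
move=> bB bC; apply: dist_sup_image_le (tnorm_ge0 _) (numerical_range_ub bB)
  (numerical_range_ub bC) _ => x; exact: dist_ip_opt_le.
Qed.

Lemma c_t_dist_le B C : bounded_op ip B -> bounded_op ip C ->
  `|c_t ip phi psi t B - c_t ip phi psi t C|
    <= tnorm ip phi psi t (fun x => B x - C x).
Proof.
move=> bB bC; apply: dist_inf_image_le (tnorm_ge0 _) (numerical_range_lb B)
  (numerical_range_lb C) _ => x; exact: dist_ip_opt_le.
Qed.

End NumericalRange.

End InnerProduct.

Lemma cvg_dist_le (R : realFieldType) (u e : nat -> R) (l : R) :
  (forall n, `|u n - l| <= e n) -> e @ \oo --> 0 -> u @ \oo --> l.
Proof.
move=> ue /cvgrPdist_le e0; apply/cvgrPdist_le => eps eps_gt0.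
apply: filterS (e0 _ eps_gt0) => n; rewrite sub0r normrN distrC => en_le.
exact: le_trans (ue n) (le_trans (ler_norm _) en_le).
Qed.

Theorem theorem2p5 (R : realType) (V : lmodType R[i]) (ip : V -> V -> R[i])
  (hH : is_hilbert ip) (phi psi : R -> R)
  (hphi : {within `[(0:R), 1], continuous phi})
  (hpsi : {within `[(0:R), 1], continuous psi})
  (t : R) (ht : t \in `[0, 1])
  (An : nat -> V -> V) (A : V -> V)
  (hAn : forall n, bounded_op ip (An n)) (hA : bounded_op ip A)
  (hconv : (fun n => tnorm ip phi psi t (fun x => An n x - A x)) @ \oo --> 0) :
  (fun n => omega_t ip phi psi t (An n)) @ \oo --> omega_t ip phi psi t A /\
  (fun n => c_t ip phi psi t (An n)) @ \oo --> c_t ip phi psi t A.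
Proof.
have [ip_lin ip_conj ip_ge0 ip_eq0 complete] := hH.
split; apply: cvg_dist_le hconv => n.
- exact: omega_t_dist_le.
- exact: c_t_dist_le.
Qed.
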